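(* For every integer $n\ge5$ there exists a prismatic cube $\Pi_{4,3}^n$ in hyperbolic space $\mathbb{H}^3$.
   Context: Let $P_{4,3}^n$ be the regular (possibly ideal or hyperideal) hyperbolic cube centered at a point $O$ whose dihedral angle is $2\pi/n$, and let $\Gamma_{4,3}^n$ be the discrete group generated by the hyperbolic reflections in the planes of the faces of $P_{4,3}^n$ (it has $P_{4,3}^n$ as a fundamental domain). A prismatic cube $\Pi_{4,3}^n$ is obtained as follows: one chooses a smaller compact regular cube $Q$ centered at $O$, with the same symmetry axes as $P_{4,3}^n$ and lying inside it, such that for each face $F$ of $Q$, the face $F$ and its image $F'$ under reflection in the corresponding face of $P_{4,3}^n$ are the bottom and top of a prism whose four lateral faces are regular squares (all edges of equal length). $\Pi_{4,3}^n$ is the union of all images under $\Gamma_{4,3}^n$ of these lateral squares; it is an infinite polyhedral surface consisting of squares. Existence of $\Pi_{4,3}^n$ means existence of such a $Q$. *)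

(* concrete reals R.  Hyperbolic 3-space is modelled by the
   hyperboloid model  H^3 = { x in R^{3,1} | <x,x> = -1, x0 > 0 }. *)
From Stdlib Require Import Reals Lra.
Open Scope R_scope.

Record V4 := mkV { c0 : R; c1 : R; c2 : R; c3 : R }.

Definition mink (x y : V4) : R :=
  - c0 x * c0 y + c1 x * c1 y + c2 x * c2 y + c3 x * c3 y.

Definition vadd (x y : V4) : V4 :=
  mkV (c0 x + c0 y) (c1 x + c1 y) (c2 x + c2 y) (c3 x + c3 y).
Definition vscale (a : R) (x : V4) : V4 :=
  mkV (a * c0 x) (a * c1 x) (a * c2 x) (a * c3 x).

Definition in_H3 (x : V4) : Prop := mink x x = -1 /\ 0 < c0 x.

Definition O_pt : V4 := mkV 1 0 0 0.

(* hyperbolic distance: cosh (dist x y) = - <x,y> *)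
Definition arcosh (t : R) : R := ln (t + sqrt (t * t - 1)).
Definition hdist (x y : V4) : R := arcosh (- mink x y).

(* angle at q between the geodesic segments [q,p] and [q,r]:
   initial tangent vector at q towards p is p + <q,p> q *)
Definition tangent (q p : V4) : V4 := vadd p (vscale (mink q p) q).
Definition hangle (p q r : V4) : R :=
  let t1 := tangent q p in let t2 := tangent q r in
  acos (mink t1 t2 / sqrt (mink t1 t1 * mink t2 t2)).

(* a hyperbolic plane = { x in H^3 | <x,m> = 0 } with <m,m> = 1 ;
   reflection in that plane *)
Definition reflect (m x : V4) : V4 := vadd x (vscale (-2 * mink x m) m).

Definition coplanar4 (p1 p2 p3 p4 : V4) : Prop :=
  exists m : V4, mink m m = 1 /\
    mink p1 m = 0 /\ mink p2 m = 0 /\ mink p3 m = 0 /\ mink p4 m = 0.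

Definition regular_square (p1 p2 p3 p4 : V4) : Prop :=
  coplanar4 p1 p2 p3 p4 /\
  hdist p1 p2 = hdist p2 p3 /\ hdist p2 p3 = hdist p3 p4 /\
  hdist p3 p4 = hdist p4 p1 /\
  hangle p4 p1 p2 = hangle p1 p2 p3 /\ hangle p1 p2 p3 = hangle p2 p3 p4 /\
  hangle p2 p3 p4 = hangle p3 p4 p1.

Inductive axis := A1 | A2 | A3.

Definition axis_eqb (i j : axis) : bool :=
  match i, j with A1, A1 | A2, A2 | A3, A3 => true | _, _ => false end.

Definition sgn (b : bool) : R := if b then 1 else -1.

(* Regular cube P centered at O, faces orthogonal to the coordinate axes at
   hyperbolic distance d from O.  The face orthogonal to axis i on side s
   lies in the plane with unit outward normal  pnormal d i s,
   i.e. the plane  x_i / x_0 = sgn s * tanh d. *)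
Definition pnormal (d : R) (i : axis) (s : bool) : V4 :=
  let e j := if axis_eqb i j then sgn s * cosh d else 0 in
  mkV (sinh d) (e A1) (e A2) (e A3).

(* P = intersection of the six half-spaces containing O *)
Definition in_P (d : R) (x : V4) : Prop :=
  forall (i : axis) (s : bool), mink x (pnormal d i s) <= 0.

(* dihedral angle of P (between two adjacent faces, with outward unit
   normals m1 m2 : cos(angle) = - <m1,m2>); all are equal by symmetry *)
Definition cube_dihedral (d : R) : R :=
  acos (- mink (pnormal d A1 true) (pnormal d A2 true)).

(* Compact regular cube Q centered at O with the same symmetry axes:
   its vertices are on the diagonals, indexed by sign patterns sg. *)
Definition qvertex (w : R) (sg : axis -> bool) : V4 :=
  mkV (sqrt (1 + 3 * (w * w))) (sgn (sg A1) * w) (sgn (sg A2) * w)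
      (sgn (sg A3) * w).

Definition flip (sg : axis -> bool) (j : axis) : axis -> bool :=
  fun k => if axis_eqb j k then negb (sg k) else sg k.

(* Existence of the prismatic cube Pi_{4,3} for the cube P of parameter d:
   there is a (nondegenerate) compact regular cube Q (parameter w > 0)
   lying in P such that, for every face F of Q (the face orthogonal to
   axis i on side s, with vertices sg such that sg i = s) and every edge
   [v1,v2] of F (v2 = flip of v1 along an axis j <> i), the lateral face
   v1 v2 v2' v1' of the prism with bottom F and top F' = reflection of F in
   the corresponding face plane of P is a regular square. *)
Definition prismatic_cube_exists (d : R) : Prop :=
  exists w : R, 0 < w /\
    (forall sg, in_P d (qvertex w sg)) /\
    (forall (i : axis) (s : bool) (j : axis) (sg : axis -> bool),
        j <> i -> sg i = s ->
        let v1 := qvertex w sg in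
        let v2 := qvertex w (flip sg j) in
        let m := pnormal d i s in
        regular_square v1 v2 (reflect m v2) (reflect m v1)).

From Stdlib Require Import Reals Lra Psatz.
Open Scope R_scope.

(* The faces of P lie at distance d from O, and two adjacent unit
   face normals have Minkowski product -sinh d ^ 2, so the dihedral angle
   is acos (sinh d ^ 2); the angle 2 PI / n < PI / 2 is attained with
   sinh d = sqrt (cos (2 PI / n)).  Let v = (a, +-w, +-w, +-w), with
   a = sqrt (1 + 3 w^2), be the vertices of Q and m a face normal of P.
   Since cosh of a distance is minus the Minkowski product, the lateral edge
   [v, R_m v] has the length of the base edges exactly when
   <v, m>^2 = w^2, i.e. when a sinh d = w (1 + cosh d), which has a
   positive solution w as soon as cosh d < 2.  The lateral quadrilateral
   v1 v2 R_m v2 R_m v1 is then a regular square: it is preserved by R_m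
   and by the coordinate reflection swapping v1 and v2, two commuting
   isometries acting transitively on its vertices, so its angles agree and
   its sides have the length of either the base or the lateral edge. *)

Lemma V4_eq x y :
  c0 x = c0 y -> c1 x = c1 y -> c2 x = c2 y -> c3 x = c3 y -> x = y.
Proof. destruct x, y; simpl; intros; subst; reflexivity. Qed.

Lemma mink_comm x y : mink x y = mink y x.
Proof. unfold mink; ring. Qed.

Lemma mink_addl x y z : mink (vadd x y) z = mink x z + mink y z.
Proof. unfold mink, vadd; simpl; ring. Qed.

Lemma mink_addr x y z : mink x (vadd y z) = mink x y + mink x z.
Proof. unfold mink, vadd; simpl; ring. Qed.

Lemma mink_scalel a x z : mink (vscale a x) z = a * mink x z.
Proof. unfold mink, vscale; simpl; ring. Qed.

Lemma mink_scaler a x z : mink z (vscale a x) = a * mink z x.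
Proof. unfold mink, vscale; simpl; ring. Qed.

Lemma reflect_add m x y :
  reflect m (vadd x y) = vadd (reflect m x) (reflect m y).
Proof. unfold reflect; rewrite mink_addl; apply V4_eq; simpl; ring. Qed.

Lemma reflect_scale m a x : reflect m (vscale a x) = vscale a (reflect m x).
Proof. unfold reflect; rewrite mink_scalel; apply V4_eq; simpl; ring. Qed.

Lemma mink_reflect m x y : mink m m = 1 ->
  mink (reflect m x) (reflect m y) = mink x y.
Proof.
  intro Hm; unfold reflect.
  repeat rewrite ?mink_addl, ?mink_addr, ?mink_scalel, ?mink_scaler.
  rewrite (mink_comm m y), Hm; ring.
Qed.

Lemma mink_reflect_self m v :
  mink v (reflect m v) = mink v v - 2 * (mink v m * mink v m).
Proof. unfold reflect; rewrite mink_addr, mink_scaler; ring. Qed.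

Lemma mink_reflect_orth m v n : mink v n = 0 -> mink m n = 0 ->
  mink (reflect m v) n = 0.
Proof.
  intros Hv Hm; unfold reflect; rewrite mink_addl, mink_scalel, Hv, Hm; ring.
Qed.

Lemma reflectK m x : mink m m = 1 -> reflect m (reflect m x) = x.
Proof.
  intro Hm; unfold reflect; rewrite mink_addl, mink_scalel, Hm.
  apply V4_eq; simpl; ring.
Qed.

Lemma reflect_comm e m x : mink e m = 0 ->
  reflect m (reflect e x) = reflect e (reflect m x).
Proof.
  intro Hem; unfold reflect.
  rewrite !mink_addl, !mink_scalel, Hem, (mink_comm m e), Hem.
  apply V4_eq; simpl; ring.
Qed.

Lemma tangent_reflect m p q : mink m m = 1 ->
  tangent (reflect m q) (reflect m p) = reflect m (tangent q p).
Proof.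
  intro Hm; unfold tangent.
  rewrite mink_reflect, reflect_add, reflect_scale by exact Hm; reflexivity.
Qed.

Lemma hangle_reflect m p q r : mink m m = 1 ->
  hangle (reflect m p) (reflect m q) (reflect m r) = hangle p q r.
Proof.
  intro Hm; unfold hangle; cbv zeta.
  rewrite !tangent_reflect, !mink_reflect by exact Hm; reflexivity.
Qed.

Lemma hangle_comm p q r : hangle p q r = hangle r q p.
Proof.
  unfold hangle; cbv zeta.
  rewrite (mink_comm (tangent q r) (tangent q p)),
    (Rmult_comm (mink (tangent q r) (tangent q r))).
  reflexivity.
Qed.

Lemma coplanar4_of_normal p1 p2 p3 p4 n : 0 < mink n n ->
  mink p1 n = 0 -> mink p2 n = 0 -> mink p3 n = 0 -> mink p4 n = 0 ->
  coplanar4 p1 p2 p3 p4.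
Proof.
  intros Hn H1 H2 H3 H4.
  assert (Hs : 0 < sqrt (mink n n)) by (apply sqrt_lt_R0; exact Hn).
  exists (vscale (/ sqrt (mink n n)) n).
  rewrite mink_scalel, !mink_scaler, H1, H2, H3, H4.
  repeat split; try ring.
  rewrite <- (sqrt_sqrt (mink n n)) at 3 by lra; field; lra.
Qed.

Lemma regular_square_of_reflections v1 v2 m e n :
  mink m m = 1 -> mink e e = 1 -> mink e m = 0 -> reflect e v1 = v2 ->
  mink v1 v2 = mink v1 (reflect m v1) ->
  0 < mink n n -> mink v1 n = 0 -> mink v2 n = 0 -> mink m n = 0 ->
  regular_square v1 v2 (reflect m v2) (reflect m v1).
Proof.
  intros Hm He Hem Hv12 Hlat Hn Hn1 Hn2 Hmn.
  assert (Hv21 : reflect e v2 = v1) by (rewrite <- Hv12; exact (reflectK e v1 He)).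
  assert (HemR : forall v, reflect e (reflect m v) = reflect m (reflect e v))
    by (intro v; symmetry; exact (reflect_comm e m v Hem)).
  assert (Hlat2 : mink v2 (reflect m v2) = mink v1 (reflect m v1)).
  { rewrite <- Hv12, <- HemR; exact (mink_reflect e _ _ He). }
  unfold regular_square, hdist.
  rewrite !mink_reflect, (mink_comm v2 v1), (mink_comm (reflect m v1) v1),
    Hlat, Hlat2 by exact Hm.
  split; [| split; [| split; [| split; [| split; [| split]]]]]; try reflexivity.
  - apply (coplanar4_of_normal _ _ _ _ n); auto using mink_reflect_orth.
  - rewrite <- (hangle_reflect e (reflect m v1) v1 v2), HemR, Hv12, Hv21
      by exact He.
    apply hangle_comm.
  - rewrite <- (hangle_reflect m v1 v2 (reflect m v2)), reflectK by exact Hm.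
    apply hangle_comm.
  - rewrite <- (hangle_reflect e v2 (reflect m v2) (reflect m v1)), !HemR,
      Hv12, Hv21 by exact He.
    apply hangle_comm.
Qed.

Lemma cosh_sqr_sub_sinh_sqr d : cosh d * cosh d - sinh d * sinh d = 1.
Proof.
  unfold cosh, sinh.
  assert (exp d * exp (- d) = 1).
  { rewrite <- exp_plus, Rplus_opp_r; exact exp_0. }
  field_simplify; nra.
Qed.

Lemma cosh_pos d : 0 < cosh d.
Proof. unfold cosh; pose proof (exp_pos d); pose proof (exp_pos (- d)); lra. Qed.

Definition axis_normal (j : axis) : V4 :=
  mkV 0 (if axis_eqb j A1 then 1 else 0) (if axis_eqb j A2 then 1 else 0)
      (if axis_eqb j A3 then 1 else 0).

Lemma axis_normal_unit j : mink (axis_normal j) (axis_normal j) = 1.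
Proof. destruct j; unfold mink, axis_normal; simpl; ring. Qed.

Lemma axis_normal_pnormal d i s j : j <> i ->
  mink (axis_normal j) (pnormal d i s) = 0.
Proof.
  intro Hji; destruct i, j; try congruence;
    destruct s; unfold mink, axis_normal, pnormal; simpl; ring.
Qed.

Lemma pnormal_unit d i s : mink (pnormal d i s) (pnormal d i s) = 1.
Proof.
  pose proof (cosh_sqr_sub_sinh_sqr d).
  destruct i, s; unfold mink, pnormal; simpl; nra.
Qed.

Lemma reflect_axis_normal_qvertex w sg j :
  reflect (axis_normal j) (qvertex w sg) = qvertex w (flip sg j).
Proof.
  destruct j; unfold reflect, qvertex, flip, axis_normal, mink; apply V4_eq;
    simpl; destruct (sg A1), (sg A2), (sg A3); simpl; ring.
Qed.

Lemma qvertex_norm w sg : mink (qvertex w sg) (qvertex w sg) = -1.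
Proof.
  pose proof (sqrt_sqrt (1 + 3 * (w * w))).
  unfold mink, qvertex; simpl.
  destruct (sg A1), (sg A2), (sg A3); simpl; nra.
Qed.

Lemma mink_qvertex_flip w sg j :
  mink (qvertex w sg) (qvertex w (flip sg j)) = -1 - 2 * (w * w).
Proof.
  pose proof (sqrt_sqrt (1 + 3 * (w * w))).
  unfold mink, qvertex, flip; destruct j; simpl;
    destruct (sg A1), (sg A2), (sg A3); simpl; nra.
Qed.

Lemma mink_qvertex_pnormal d w sg i s :
  mink (qvertex w sg) (pnormal d i s) =
  sgn s * sgn (sg i) * (w * cosh d) - sqrt (1 + 3 * (w * w)) * sinh d.
Proof.
  unfold mink, qvertex, pnormal; destruct i; simpl;
    destruct (sg A1), (sg A2), (sg A3), s; simpl; ring.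
Qed.

(* A normal to the plane through qvertex w sg, its flip along j and the
   normal pnormal d i (sg i); its j-th coordinate vanishes because the
   reflection in axis_normal j swaps the two vertices. *)
Definition lateral_normal (d w : R) (i j : axis) (sg : axis -> bool) : V4 :=
  let a := sqrt (1 + 3 * (w * w)) in
  let e l := if axis_eqb i l then sgn (sg i) * sinh d * w else
             if axis_eqb j l then 0 else sgn (sg l) * (cosh d * a - sinh d * w) in
  mkV (w * cosh d) (e A1) (e A2) (e A3).

Lemma lateral_normal_orth d w i j sg : j <> i ->
  mink (pnormal d i (sg i)) (lateral_normal d w i j sg) = 0 /\
  mink (qvertex w sg) (lateral_normal d w i j sg) = 0 /\
  mink (qvertex w (flip sg j)) (lateral_normal d w i j sg) = 0.
Proof.
  intro Hji; unfold mink, lateral_normal, pnormal, qvertex, flip;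
    destruct i, j; try congruence; simpl;
    destruct (sg A1), (sg A2), (sg A3); simpl; repeat split; ring.
Qed.

Lemma lateral_normal_norm d w i j sg : j <> i ->
  mink (lateral_normal d w i j sg) (lateral_normal d w i j sg) =
  (cosh d * sqrt (1 + 3 * (w * w)) - sinh d * w) ^ 2 - w * w.
Proof.
  intro Hji; pose proof (cosh_sqr_sub_sinh_sqr d) as Hcs.
  transitivity ((cosh d * sqrt (1 + 3 * (w * w)) - sinh d * w) ^ 2
                - w * w * (cosh d * cosh d - sinh d * sinh d)).
  - unfold mink, lateral_normal; destruct i, j; try congruence; simpl;
      destruct (sg A1), (sg A2), (sg A3); simpl; ring.
  - rewrite Hcs; ring.
Qed.

Section PrismaticCube.

Variables d w : R.
Hypothesis sinh_d_gt0 : 0 < sinh d.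
Hypothesis w_gt0 : 0 < w.
Hypothesis lateral_edge_eq :
  sqrt (1 + 3 * (w * w)) * sinh d = w * (1 + cosh d).

Lemma mink_qvertex_face sg i : mink (qvertex w sg) (pnormal d i (sg i)) = - w.
Proof.
  rewrite mink_qvertex_pnormal.
  replace (sgn (sg i) * sgn (sg i)) with 1 by (destruct (sg i); simpl; ring).
  lra.
Qed.

Lemma qvertex_in_P sg : in_P d (qvertex w sg).
Proof.
  intros i s; rewrite mink_qvertex_pnormal.
  pose proof (cosh_pos d).
  assert (Hsgn : sgn s * sgn (sg i) <= 1) by (destruct s, (sg i); simpl; lra).
  assert (0 <= (1 - sgn s * sgn (sg i)) * (w * cosh d))
    by (apply Rmult_le_pos; nra).
  lra.
Qed.

Lemma lateral_normal_pos i j sg : j <> i ->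
  0 < mink (lateral_normal d w i j sg) (lateral_normal d w i j sg).
Proof.
  intro Hji; rewrite lateral_normal_norm by exact Hji.
  pose proof (cosh_sqr_sub_sinh_sqr d) as Hcs; pose proof (cosh_pos d).
  set (t := cosh d * sqrt (1 + 3 * (w * w)) - sinh d * w).
  assert (Ht : sinh d * t = w * (1 + cosh d)).
  { unfold t; transitivity (cosh d * (sqrt (1 + 3 * (w * w)) * sinh d)
                            - sinh d * sinh d * w); [ring|].
    rewrite lateral_edge_eq; nra. }
  assert (Hsh : sinh d < 1 + cosh d) by nra.
  assert (w < t) by nra.
  nra.
Qed.

Lemma prismatic_cube_exists_of_lateral_edge : prismatic_cube_exists d.
Proof.
  exists w; split; [exact w_gt0 | split; [exact qvertex_in_P |]].
  intros i s j sg Hji <-; cbv zeta.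
  destruct (lateral_normal_orth d w i j sg Hji) as [Nm [N1 N2]].
  apply (regular_square_of_reflections _ _ _ (axis_normal j)
           (lateral_normal d w i j sg));
    auto using pnormal_unit, axis_normal_unit, axis_normal_pnormal,
      reflect_axis_normal_qvertex, lateral_normal_pos.
  rewrite mink_qvertex_flip, mink_reflect_self, qvertex_norm,
    mink_qvertex_face; ring.
Qed.

End PrismaticCube.

Lemma lateral_edge_solution d : 0 < sinh d -> cosh d < 2 ->
  exists w, 0 < w /\ sqrt (1 + 3 * (w * w)) * sinh d = w * (1 + cosh d).
Proof.
  intros Hsh Hch2.
  pose proof (cosh_sqr_sub_sinh_sqr d) as Hcs; pose proof (cosh_pos d).
  set (D := (1 + cosh d) * (1 + cosh d) - 3 * (sinh d * sinh d)).
  (* D = 2 (2 - cosh d) (1 + cosh d) *)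
  assert (HD : 0 < D) by (unfold D; nra).
  assert (HsD : sqrt D * sqrt D = D) by (apply sqrt_sqrt; lra).
  assert (HsD0 : 0 < sqrt D) by (apply sqrt_lt_R0; exact HD).
  exists (sinh d / sqrt D); split; [apply Rdiv_lt_0_compat; assumption |].
  assert (Ha : 1 + 3 * (sinh d / sqrt D * (sinh d / sqrt D))
               = ((1 + cosh d) / sqrt D) ^ 2).
  { field_simplify; [| lra | lra].
    replace (sqrt D ^ 2) with (sqrt D * sqrt D) by ring; rewrite HsD.
    f_equal; unfold D; ring. }
  rewrite Ha, sqrt_pow2 by (apply Rlt_le, Rdiv_lt_0_compat; lra).
  field; lra.
Qed.

Lemma prismatic_cube_exists_of_cosh_lt_2 d : 0 < d -> cosh d < 2 ->
  prismatic_cube_exists d.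
Proof.
  intros Hd Hch2.
  assert (Hsh : 0 < sinh d) by (rewrite <- sinh_0; exact (sinh_lt 0 d Hd)).
  destruct (lateral_edge_solution d Hsh Hch2) as [w [Hw Hlat]].
  exact (prismatic_cube_exists_of_lateral_edge d w Hsh Hw Hlat).
Qed.

Lemma cube_dihedralE d : cube_dihedral d = acos (sinh d * sinh d).
Proof. unfold cube_dihedral; f_equal; unfold mink, pnormal; simpl; ring. Qed.

Lemma acos_pos_lt x : 0 < acos x -> x < 1.
Proof.
  unfold acos; destruct (Rle_dec x (-1)); [lra |].
  destruct (Rle_dec 1 x); lra.
Qed.

Lemma cosh_lt_2_of_dihedral_pos d : 0 < cube_dihedral d -> cosh d < 2.
Proof.
  rewrite cube_dihedralE; intro Hpos; apply acos_pos_lt in Hpos.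
  pose proof (cosh_sqr_sub_sinh_sqr d); pose proof (cosh_pos d); nra.
Qed.

Lemma cube_dihedral_attained theta : 0 < theta < PI / 2 ->
  exists d, 0 < d /\ cube_dihedral d = theta.
Proof.
  intro Htheta.
  assert (Hc : 0 < cos theta) by (apply cos_gt_0; lra).
  exists (arcsinh (sqrt (cos theta))); split.
  - rewrite <- arcsinh_0; apply arcsinh_lt, sqrt_lt_R0; exact Hc.
  - rewrite cube_dihedralE, sinh_arcsinh, sqrt_sqrt by lra.
    apply acos_cos; lra.
Qed.

Theorem mainTheorem3 :
  forall n : nat, (5 <= n)%nat ->
    (exists d : R, 0 < d /\ cube_dihedral d = 2 * PI / INR n) /\
    (forall d : R, 0 < d -> cube_dihedral d = 2 * PI / INR n ->
       prismatic_cube_exists d).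
Proof.
  intros n Hn.
  assert (Hn5 : 5 <= INR n) by (pose proof (le_INR _ _ Hn) as H5; simpl in H5; lra).
  pose proof PI_RGT_0.
  assert (Htheta : 0 < 2 * PI / INR n < PI / 2).
  { split; [apply Rdiv_lt_0_compat; lra |].
    apply (Rmult_lt_reg_r (INR n)); [lra |].
    unfold Rdiv; rewrite Rmult_assoc, Rinv_l by lra; nra. }
  split; [exact (cube_dihedral_attained _ Htheta) |].
  intros d Hd Hdih.
  apply prismatic_cube_exists_of_cosh_lt_2; [exact Hd |].
  apply cosh_lt_2_of_dihedral_pos; lra.
Qed.
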